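(* If $Q$ is a quantity space over a field $K$, then any two bases for $Q$ have the same cardinality.
   Context: A scalable monoid over a (unital, associative) ring $R$ is a monoid $X$ (identity $1_X$, product written $xy$) together with a map $R\times X\to X$, $(\alpha,x)\mapsto\alpha\cdot x$, such that $1\cdot x=x$, $\alpha\cdot(\beta\cdot x)=\alpha\beta\cdot x$ and $\alpha\cdot(xy)=(\alpha\cdot x)y=x(\alpha\cdot y)$. A quantity space over a field $K$ is a commutative scalable monoid $Q$ over $K$ for which there exists a basis, i.e. a finite set $\{e_1,\ldots,e_n\}$ of invertible elements of $Q$ such that every $x\in Q$ has a unique expansion $x=\mu\cdot\prod_{i=1}^n e_i^{k_i}$ with $\mu\in K$ and $k_1,\ldots,k_n\in\mathbb{Z}$. *)

From mathcomp Require Import all_boot all_order all_algebra.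
Set Implicit Arguments. Unset Strict Implicit. Unset Printing Implicit Defensive.
Import GRing.Theory.
Local Open Scope ring_scope.

Definition is_scalable_monoid (R : pzRingType) (X : Type)
    (one : X) (mul : X -> X -> X) (scale : R -> X -> X) : Prop :=
  (forall x y z, mul x (mul y z) = mul (mul x y) z) /\
  (forall x, mul one x = x) /\
  (forall x, mul x one = x) /\
  (forall x, scale 1 x = x) /\
  (forall a b x, scale a (scale b x) = scale (a * b) x) /\
  (forall a x y, scale a (mul x y) = mul (scale a x) y
                 /\ scale a (mul x y) = mul x (scale a y)).

Definition zpow (X : Type) (one : X) (mul : X -> X -> X) (x xinv : X) (k : int) : X :=
  match k with
  | Posz n => iter n (mul x) one
  | Negz n => iter n.+1 (mul xinv) one
  end.

Definition zprod (X : Type) (one : X) (mul : X -> X -> X) (n : nat)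
    (e einv : 'I_n -> X) (k : 'I_n -> int) : X :=
  foldr (fun i acc => mul (zpow one mul (e i) (einv i) (k i)) acc) one (enum 'I_n).

Definition is_basis (K : fieldType) (X : Type)
    (one : X) (mul : X -> X -> X) (scale : K -> X -> X)
    (n : nat) (e : 'I_n -> X) : Prop :=
  injective e /\
  exists einv : 'I_n -> X,
    (forall i, mul (e i) (einv i) = one /\ mul (einv i) (e i) = one) /\
    forall x : X,
      (exists (mu : K) (k : 'I_n -> int), x = scale mu (zprod one mul e einv k)) /\
      (forall (mu mu' : K) (k k' : 'I_n -> int),
          x = scale mu (zprod one mul e einv k) ->
          x = scale mu' (zprod one mul e einv k') ->
          mu = mu' /\ (forall i, k i = k' i)).

Definition is_quantity_space (K : fieldType) (X : Type)
    (one : X) (mul : X -> X -> X) (scale : K -> X -> X) : Prop :=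
  [/\ is_scalable_monoid one mul scale,
      (forall x y, mul x y = mul y x)
    & exists (n : nat) (e : 'I_n -> X), is_basis one mul scale e].

From HB Require Import structures.
From mathcomp Require Import all_boot all_order all_algebra.
From Stdlib Require Import ClassicalEpsilon.
Set Implicit Arguments. Unset Strict Implicit. Unset Printing Implicit Defensive.
Import GRing.Theory.
Local Open Scope ring_scope.

(* For a basis e of size n, the exponent vector k of x = mu . prod_i e_i^(k_i)
   is well defined, and x |-> k is a monoid morphism Q -> Z^n that ignores
   scalars and sends e_i to the i-th unit vector.  If f is a second basis of
   size m, expanding each e_i in f and applying the exponent morphism of e
   yields integer matrices B (n x m) and A (m x n) with B A = 1, whence
   n <= m; by symmetry n = m. *)

Lemma zprodE (Q : Type) (one : Q) (mul : Q -> Q -> Q) n (e einv : 'I_n -> Q) k :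
  zprod one mul e einv k = \big[mul/one]_(i < n) zpow one mul (e i) (einv i) (k i).
Proof. by rewrite /zprod [index_enum _]unlock -enumT unlock. Qed.

Lemma eq_zprod (Q : Type) (one : Q) (mul : Q -> Q -> Q) n (e einv : 'I_n -> Q) k k' :
  k =1 k' -> zprod one mul e einv k = zprod one mul e einv k'.
Proof. by move=> eq_k; rewrite !zprodE; apply: eq_bigr => i _; rewrite eq_k. Qed.

Section MonoidMorphism.
Variables (Q : Type) (one : Q) (mul : Q -> Q -> Q) (V : zmodType) (h : Q -> V).
Hypothesis h_one : h one = 0.
Hypothesis h_mul : {morph h : x y / mul x y >-> x + y}.

Lemma morph_iter_mul x n : h (iter n (mul x) one) = h x *+ n.
Proof. by elim: n => [|n IH] //=; rewrite h_mul IH mulrS. Qed.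

Lemma morph_zpow x xi k : mul x xi = one -> h (zpow one mul x xi k) = h x *~ k.
Proof.
move=> x_xi; have h_xi : h xi = - h x.
  by apply/eqP; rewrite -addr_eq0 addrC -h_mul x_xi h_one.
by case: k => n; rewrite /zpow morph_iter_mul // h_xi NegzE mulrNz mulNrn.
Qed.

Lemma morph_zprod n (e einv : 'I_n -> Q) k :
  (forall i, mul (e i) (einv i) = one) ->
  h (zprod one mul e einv k) = \sum_i h (e i) *~ k i.
Proof.
move=> e_einv; rewrite zprodE (big_morph h h_mul h_one).
by apply: eq_bigr => i _; apply: morph_zpow.
Qed.

End MonoidMorphism.

Section CommutativeScalableMonoid.
Variables (K : fieldType) (Q : Type) (one : Q) (mul : Q -> Q -> Q) (scale : K -> Q -> Q).
Hypothesis mulA : associative mul.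
Hypothesis mulC : commutative mul.
Hypothesis mul1m : left_id one mul.
Hypothesis scale1 : forall x, scale 1 x = x.
Hypothesis scaleA : forall a b x, scale a (scale b x) = scale (a * b) x.
Hypothesis scale_mull : forall a x y, scale a (mul x y) = mul (scale a x) y.

HB.instance Definition _ := Monoid.isComLaw.Build Q one mul mulA mulC mul1m.

Lemma mul_scale a b x y : mul (scale a x) (scale b y) = scale (a * b) (mul x y).
Proof. by rewrite -scale_mull mulC -scale_mull scaleA mulrC mulC. Qed.

Section Power.
Variables (x xi : Q).
Hypothesis x_xi : mul x xi = one.

Local Notation zp := (zpow one mul x xi).

Lemma zpowS k : zp (k + 1) = mul x (zp k).
Proof.
case: k => [n|[|n]] /=; first by rewrite addn1.
  by rewrite Monoid.mulm1 x_xi.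
by rewrite subn1 /= mulA x_xi mul1m.
Qed.

Lemma zpowB k : zp (k - 1) = mul xi (zp k).
Proof. by rewrite -[in RHS](subrK 1 k) zpowS mulA [mul xi x]mulC x_xi mul1m. Qed.

Lemma zpowD k l : mul (zp k) (zp l) = zp (k + l).
Proof.
elim/int_rect: l => [|n IH|n IH]; first by rewrite addr0 Monoid.mulm1.
- by rewrite -addn1 PoszD addrA !zpowS -IH !mulA [mul (zp k) x]mulC.
- by rewrite -addn1 PoszD opprD addrA !zpowB -IH !mulA [mul (zp k) xi]mulC.
Qed.

End Power.

Section Monomials.
Variables (n : nat) (e einv : 'I_n -> Q).
Hypothesis e_einv : forall i, mul (e i) (einv i) = one.

Local Notation monomial := (zprod one mul e einv).

Lemma zprodD k l : mul (monomial k) (monomial l) = monomial (fun i => k i + l i).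
Proof. by rewrite !zprodE -big_split; apply: eq_bigr => i _; apply: zpowD. Qed.

Lemma zprod_delta i : monomial (fun j => (j == i)%:Z) = e i.
Proof.
rewrite zprodE (bigD1 i) //= big1 => [|j /negPf -> //].
by rewrite eqxx /= !Monoid.mulm1.
Qed.

Hypothesis e_basis : forall x,
  (exists (mu : K) (k : 'I_n -> int), x = scale mu (monomial k)) /\
  (forall (mu mu' : K) (k k' : 'I_n -> int),
     x = scale mu (monomial k) -> x = scale mu' (monomial k') ->
     mu = mu' /\ (forall i, k i = k' i)).

Definition has_exponent (x : Q) (v : 'rV[int]_n) : Prop :=
  exists mu, x = scale mu (monomial (fun i => v 0 i)).

Definition exponent (x : Q) : 'rV[int]_n := epsilon (inhabits 0) (has_exponent x).

Lemma exponentP x : has_exponent x (exponent x).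
Proof.
apply: epsilon_spec.
have [mu [k ->]] := (e_basis x).1.
by exists (\row_i k i), mu; congr scale; apply: eq_zprod => i; rewrite mxE.
Qed.

Lemma exponent_zprod mu k : exponent (scale mu (monomial k)) = \row_i k i.
Proof.
have [nu E] := exponentP (scale mu (monomial k)).
apply/rowP => i; rewrite mxE.
by have [_ ->] := (e_basis _).2 _ _ _ _ E (erefl (scale mu (monomial k))).
Qed.

Lemma exponentZ a x : exponent (scale a x) = exponent x.
Proof.
have [mu Ex] := exponentP x.
rewrite {1}Ex scaleA exponent_zprod.
by apply/rowP => i; rewrite mxE.
Qed.

Lemma exponentM : {morph exponent : x y / mul x y >-> x + y}.
Proof.
move=> x y; have [mu Ex] := exponentP x; have [nu Ey] := exponentP y.
rewrite {1}Ex {1}Ey mul_scale zprodD exponent_zprod.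
by apply/rowP => i; rewrite !mxE.
Qed.

Lemma exponent1 : exponent one = 0.
Proof. by apply: (addrI (exponent one)); rewrite -exponentM mul1m addr0. Qed.

Lemma exponent_basis i : exponent (e i) = delta_mx 0 i.
Proof.
rewrite -(zprod_delta i) -[monomial _]scale1 exponent_zprod.
by apply/rowP => j; rewrite !mxE eqxx; case: (j == i).
Qed.

End Monomials.

Lemma basis_size_le n m (e : 'I_n -> Q) (f : 'I_m -> Q) :
  is_basis one mul scale e -> is_basis one mul scale f -> (n <= m)%N.
Proof.
move=> [_ [einv [e_inv e_basis]]] [_ [finv [f_inv f_basis]]].
have e_einv i := (e_inv i).1; have f_finv j := (f_inv j).1.
pose he := exponent e einv; pose hf := exponent f finv.
apply: (@mulmx1_min _ _ _ (\matrix_i hf (e i)) (\matrix_j he (f j))).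
apply/row_matrixP => i; rewrite row_mul rowK mulmx_sum_row row1.
have [mu Ei] := exponentP f_basis (e i).
rewrite -(exponent_basis e_basis i) [in RHS]Ei (exponentZ e_basis).
rewrite (morph_zprod (exponent1 e_einv e_basis) (exponentM e_einv e_basis)) //.
by apply: eq_bigr => j _; rewrite rowK -scaler_int intz.
Qed.

End CommutativeScalableMonoid.

Theorem proposition3p21 (K : fieldType) (Q : Type)
    (one : Q) (mul : Q -> Q -> Q) (scale : K -> Q -> Q) :
  is_quantity_space one mul scale ->
  forall (n m : nat) (e : 'I_n -> Q) (f : 'I_m -> Q),
    is_basis one mul scale e -> is_basis one mul scale f -> n = m.
Proof.
move=> [[mulA [mul1m [_ [scale1 [scaleA scaleM]]]]] mulC _] n m e f e_basis f_basis.
have scale_mull a x y := (scaleM a x y).1.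
have size_le := basis_size_le mulA mulC mul1m scale1 scaleA scale_mull.
by apply/eqP; rewrite eqn_leq (size_le _ _ e f) // (size_le _ _ f e).
Qed.
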